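(* In the setting below, let $(\psi_m,\Theta_m)_{m\in\mathbb{N}}$ be an ISIMIN and let $X^x_m$ be the nearest neighbor of $x$ according to $(\psi_m,\Theta_m)$. If $r>0$ satisfies $\mathbb{P}_X(S_r)>0$, then for every $m\in\mathbb{N}$ and every Borel set $A\subseteq\mathcal{X}$, $$\mathbb{P}(X^x_m\in A\mid X^x_m\in S_r)=\mathbb{P}(X\in A\mid X\in S_r).$$ In particular, condition (B) holds: there exist $C>0$, $R>0$, $M\in\mathbb{N}$ such that for all $r\in(0,R)$ and integers $m\ge M$ with $\mathbb{P}_X(S_r)>0$, $\mathbb{E}[|\eta(X^x_m)-\eta(x)|\mid X^x_m\in S_r]\le C\,\mathbb{E}[|\eta(X)-\eta(x)|\mid X\in S_r]$ (indeed with $C=1$ and equality).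
   Context: Let $(\mathcal{X},d)$ be a metric space with its Borel $\sigma$-algebra, let $(\Omega,\mathcal{F},\mathbb{P})$ be a probability space, and let $X,X_1,X_2,\dots$ be i.i.d. $\mathcal{X}$-valued random variables with common law $\mathbb{P}_X$. For $x\in\mathcal{X}$ and $r>0$ write $S_r=\{x':d(x,x')=r\}$. Fix $x\in\mathcal{X}$ and a bounded measurable $\eta:\mathcal{X}\to\mathbb{R}$. An ISIMIN (Independent Selector of Indices of Minimum Numbers) is a sequence $(\psi_m,\Theta_m)_{m\in\mathbb{N}}$ such that for each $m$ there is a measurable space $(\mathcal{Z}_m,\mathcal{G}_m)$, $\Theta_m:\Omega\to\mathcal{Z}_m$ is a random variable independent of $(X_1,\dots,X_m)$, and $\psi_m:[0,\infty)^m\times\mathcal{Z}_m\to\{1,\dots,m\}$ is measurable with $\psi_m(r_1,\dots,r_m,z)\in\arg\min_{k\in\{1,\dots,m\}}r_k$ for all $r_1,\dots,r_m\ge0$, $z\in\mathcal{Z}_m$. The nearest neighbor of $x$ according to $(\psi_m,\Theta_m)$ is $X^x_m:=X_{\psi_m(d(x,X_1),\dots,d(x,X_m),\Theta_m)}$. Conditional probability given an event $E$ of positive probability means $\mathbb{P}(\cdot\cap E)/\mathbb{P}(E)$. *)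

From HB Require Import structures.
From mathcomp Require Import all_boot all_order all_algebra.
From mathcomp Require Import all_classical all_reals all_analysis.
Set Implicit Arguments. Unset Strict Implicit. Unset Printing Implicit Defensive.
Import Order.TTheory GRing.Theory Num.Theory.
Local Open Scope classical_set_scope.
Local Open Scope ring_scope.

Definition is_metric {R : realType} {T : Type} (dist : T -> T -> R) : Prop :=
  [/\ forall x y, 0 <= dist x y,
      forall x y, dist x y = 0 <-> x = y,
      forall x y, dist x y = dist y x &
      forall x y z, dist x z <= dist x y + dist y z].

Definition dopen {R : realType} {T : Type} (dist : T -> T -> R) (U : set T) : Prop :=
  forall y, U y -> exists2 e : R, 0 < e & [set z | dist y z < e] `<=` U.

Definition borel_of_metric {R : realType} {dT} (T : measurableType dT)
  (dist : T -> T -> R) : Prop :=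
  (@measurable _ T) = <<s [set U | dopen dist U] >>.

Definition sphere {R : realType} {T : Type} (dist : T -> T -> R) (x : T) (r : R)
  : set T := [set y | dist x y = r].

Definition condprob {R : realType} {dO} {O : measurableType dO}
  (P : probability O R) (A E : set O) : R :=
  fine (P (A `&` E)) / fine (P E).

Definition condexp {R : realType} {dO} {O : measurableType dO}
  (P : probability O R) (Y : O -> R) (E : set O) : R :=
  fine (\int[P]_(w in E) (Y w)%:E)%E / fine (P E).

Definition mutually_independent {R : realType} {dO} {O : measurableType dO}
  {dT} {T : measurableType dT} (P : probability O R) (Xs : nat -> O -> T) : Prop :=
  forall (n : nat) (A : nat -> set T), (forall i, measurable (A i)) ->
    fine (P (\bigcap_(i in `I_n) (Xs i @^-1` A i))) =
    \prod_(i < n) fine (P (Xs i @^-1` A i)).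

Definition identically_distributed {R : realType} {dO} {O : measurableType dO}
  {dT} {T : measurableType dT} (P : probability O R) (Xs : nat -> O -> T) : Prop :=
  forall i (A : set T), measurable A -> P (Xs i @^-1` A) = P (Xs 0%N @^-1` A).

(* Theta is independent of the random vector (Y 0, ..., Y (n-1)), via the
   generating pi-system of cylinder sets. *)
Definition indep_of_vector {R : realType} {dO} {O : measurableType dO}
  {dT} {T : measurableType dT} {dZ} {Z : measurableType dZ}
  (P : probability O R) (Theta : O -> Z) (n : nat) (Y : nat -> O -> T) : Prop :=
  forall (B : set Z) (A : nat -> set T), measurable B ->
    (forall i, measurable (A i)) ->
    fine (P (Theta @^-1` B `&` \bigcap_(i in `I_n) (Y i @^-1` A i))) =
    fine (P (Theta @^-1` B)) * fine (P (\bigcap_(i in `I_n) (Y i @^-1` A i))).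

(* The samples are Xs 1, Xs 2, ...; (Xs 0) plays the role of X.
   For the m-th selector we use n = m.+1 samples X_1..X_{m+1} (so that the
   index set {1,...,n} is nonempty); its indices are 'I_m.+1, where index i
   stands for sample X_{i+1}. *)
Definition is_ISIMIN {R : realType} {dO} {O : measurableType dO}
  {dT} {T : measurableType dT} (P : probability O R) (Xs : nat -> O -> T)
  (dZ : nat -> measure_display) (Z : forall m, measurableType (dZ m))
  (Theta : forall m, O -> Z m)
  (psi : forall m, (m.+1.-tuple (measurableTypeR R) * Z m)%type -> 'I_m.+1) : Prop :=
  forall m,
  [/\ measurable_fun setT (Theta m),
      indep_of_vector P (Theta m) m.+1 (fun i => Xs i.+1),
      (forall k : 'I_m.+1,
         measurable ([set rz | forall i, 0 <= tnth rz.1 i] `&`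
                     (psi m) @^-1` [set k])) &
      (forall (r : m.+1.-tuple (measurableTypeR R)) (z : Z m),
         (forall i, 0 <= tnth r i) ->
         forall j, tnth r (psi m (r, z)) <= tnth r j)].

Definition nearest_neighbor {R : realType} {dO} {O : measurableType dO}
  {T : Type} (dist : T -> T -> R) (x : T) (Xs : nat -> O -> T)
  (dZ : nat -> measure_display) (Z : forall m, measurableType (dZ m))
  (Theta : forall m, O -> Z m)
  (psi : forall m, (m.+1.-tuple (measurableTypeR R) * Z m)%type -> 'I_m.+1)
  (m : nat) : O -> T :=
  fun w => Xs (val (psi m ([tuple (dist x (Xs (val i).+1 w) : measurableTypeR R)
                            | i < m.+1], Theta m w))).+1 w.

From HB Require Import structures.
From mathcomp Require Import all_boot all_order all_algebra.
From mathcomp Require Import all_classical all_reals all_analysis.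
From mathcomp Require Import ring lra measurable_realfun.
Set Implicit Arguments. Unset Strict Implicit. Unset Printing Implicit Defensive.
Import Order.TTheory GRing.Theory Num.Theory.
Local Open Scope classical_set_scope.
Local Open Scope ring_scope.

(* Write D = (d(x,X_1), ..., d(x,X_{m+1})) and X^x_m = X_{psi(D,Theta)+1}.  For
   a Borel set B contained in the sphere S_r, the event {X^x_m in B} is the
   disjoint union over k of {X_{k+1} in B} /\ {psi(D,Theta) = k}.  On
   {X_{k+1} in S_r} the vector D coincides with the "frozen" vector D^k whose
   k-th entry is replaced by r, so the k-th piece equals
   {X_{k+1} in B} /\ G_k with G_k = {psi(D^k,Theta) = k}.  The event G_k lies in
   the sigma-algebra generated by Theta and the samples other than X_{k+1},
   hence (pi-lambda theorem) is independent of X_{k+1}.  Summing over k gives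
       P(X^x_m in B) = q * P(X in B),    q = sum_k P(G_k),
   i.e. on S_r the law of X^x_m is a multiple of the law of X.  Since X^x_m is
   one of the samples, P(X^x_m in S_r) >= P(X in S_r)^(m+1), so q > 0 whenever
   P(X in S_r) > 0.  Two general facts about random elements whose laws are
   proportional on a set S then give both the equality of conditional
   probabilities and the equality (hence condition (B) with C = 1) of
   conditional expectations. *)

Section metric_measurability.
Context (R : realType) (dT : measure_display) (T : measurableType dT)
  (dist : T -> T -> R) (hmet : is_metric dist) (hbor : borel_of_metric dist).

(* The distance to a fixed point is Borel: preimages of rays ]a, +oo[ are open
   by the triangle inequality. *)
Lemma dist_measurable (x : T) :
  measurable_fun setT (dist x : T -> measurableTypeR R).
Proof.
apply: (measurability _ (measurable_realfun.RGenInftyO.measurableE R)).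
move=> /= _ [_ [a ->] <-]; rewrite setTI hbor; apply: sub_sigma_algebra => y /=.
rewrite in_itv /= => ya; exists (a - dist x y); first by rewrite subr_gt0.
move=> z /= hz; rewrite in_itv /=.
case: hmet => _ _ _ tri; have := tri x y z; lra.
Qed.

Lemma sphere_measurable (x : T) (r : R) : measurable (sphere dist x r).
Proof. by have := dist_measurable x measurableT (measurable_set1 r); rewrite setTI. Qed.

End metric_measurability.

Section event_independence.
Context (R : realType) (dO : measure_display) (O : measurableType dO)
  (P : probability O R).

Lemma probability_fine (A : set O) : measurable A -> P A = (fine (P A))%:E.
Proof. by move=> mA; rewrite fineK// fin_num_measure. Qed.

Lemma indep_events_dynkin (E : set O) : measurable E ->
  dynkin [set G | measurable G /\ P (E `&` G) = (P E * P G)%E].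
Proof.
move=> mE; split.
- by split; [exact: measurableT|rewrite setIT probability_setT mule1].
- move=> G [mG hG]; split; first exact: measurableC.
  rewrite -setDE measureD //; last first.
    by apply: (le_lt_trans (probability_le1 _ mE)); exact: ltry.
  transitivity (P E - P E * P G)%E; first by congr (_ - _)%E; exact: hG.
  rewrite probability_setC // (probability_fine mE) (probability_fine mG).
  by rewrite -EFinM -EFinB -EFinB -EFinM; congr EFin; ring.
- move=> F tF hF; split.
    by apply: bigcupT_measurable => i; exact: (hF i).1.
  rewrite setI_bigcupr measure_semi_bigcup //; last 3 first.
  + by move=> i; apply: measurableI => //; exact: (hF i).1.
  + exact: trivIset_setIl.
  + by apply: bigcupT_measurable => i; apply: measurableI => //; exact: (hF i).1.
  rewrite (@measure_semi_bigcup _ _ _ P F) //; last 2 first.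
  + by move=> i; exact: (hF i).1.
  + by apply: bigcupT_measurable => i; exact: (hF i).1.
  have -> : (\sum_(i <oo) P (E `&` F i) =
             \sum_(i <oo) ((fine (P E))%:E * P (F i)))%E.
    by apply: eq_eseriesr => i _; rewrite (hF i).2 -(probability_fine mE).
  by rewrite nneseriesZl // -(probability_fine mE).
Qed.

Lemma indep_event_sigma (E : set O) (F : set (set O)) :
  measurable E -> setI_closed F ->
  (forall G, F G -> measurable G /\ P (E `&` G) = (P E * P G)%E) ->
  forall G, <<s F >> G -> measurable G /\ P (E `&` G) = (P E * P G)%E.
Proof.
move=> mE FI FE; apply: lambda_system_subset => //.
exact/dynkin_lambda_system/indep_events_dynkin.
Qed.

Section proportional_laws.
Context (dT : measure_display) (T : measurableType dT) (Y1 Y2 : O -> T)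
  (S : set T) (q : R).

Definition law_proportional_on : Prop :=
  forall B, measurable B -> B `<=` S ->
    P (Y1 @^-1` B) = (q * fine (P (Y2 @^-1` B)))%:E.

Hypothesis hlaw : law_proportional_on.

Lemma condprob_proportional_law (A : set T) : q != 0 ->
  measurable S -> measurable A ->
  condprob P (Y1 @^-1` A) (Y1 @^-1` S) = condprob P (Y2 @^-1` A) (Y2 @^-1` S).
Proof.
move=> q0 mS mA; rewrite /condprob -(preimage_setI Y1) -(preimage_setI Y2).
rewrite (hlaw (measurableI _ _ mA mS) (@subIsetr _ _ _)).
rewrite (hlaw mS (@subset_refl _ _)) /=.
by rewrite invfM mulrACA divff // mul1r.
Qed.

Hypotheses (mY1 : measurable_fun setT Y1) (mY2 : measurable_fun setT Y2)
  (mS : measurable S) (q_gt0 : 0 < q).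

(* Change of variables: integrals over {Y1 in S} are q times those over
   {Y2 in S}. *)
Lemma integral_proportional_law (g : T -> R) :
  measurable_fun setT (g : T -> measurableTypeR R) -> (forall y, 0 <= g y) ->
  (\int[P]_(w in Y1 @^-1` S) (g (Y1 w))%:E =
   q%:E * \int[P]_(w in Y2 @^-1` S) (g (Y2 w))%:E)%E.
Proof.
move=> mg g0.
have mgE : measurable_fun S (fun y => (g y)%:E).
  exact/measurable_funTS/measurable_realfun.measurable_EFinP.
have g0E : {in S, forall y, (0 <= (g y)%:E)%E} by move=> y _; rewrite lee_fin.
pose Z1 : {mfun O >-> T} := HB.pack Y1 (isMeasurableFun.Build _ _ _ _ _ mY1).
pose Z2 : {mfun O >-> T} := HB.pack Y2 (isMeasurableFun.Build _ _ _ _ _ mY2).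
pose qn : {nonneg R} := NngNum (ltW q_gt0).
transitivity (\int[distribution P Z1]_(y in S) (g y)%:E)%E.
  by rewrite (ge0_integral_pushforward mY1 P mS mgE g0E).
transitivity (\int[mscale qn (distribution P Z2)]_(y in S) (g y)%:E)%E.
  apply: eq_measure_integral => B mB BS.
  transitivity (P (Y1 @^-1` B)); first by [].
  have mYB : measurable (Y2 @^-1` B) by rewrite -(setTI (_ @^-1` _)); exact: mY2.
  by rewrite (hlaw mB BS) EFinM -(probability_fine mYB).
rewrite (ge0_integral_mscale _ mS) //; last by move=> y _; rewrite lee_fin.
by rewrite (ge0_integral_pushforward mY2 P mS mgE g0E).
Qed.

Lemma condexp_proportional_law (g : T -> R) :
  measurable_fun setT (g : T -> measurableTypeR R) -> (forall y, 0 <= g y) ->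
  condexp P (fun w => g (Y1 w)) (Y1 @^-1` S) =
  condexp P (fun w => g (Y2 w)) (Y2 @^-1` S).
Proof.
move=> mg g0; rewrite /condexp (integral_proportional_law mg g0) (hlaw mS) //=.
case: (\int[P]_(w in Y2 @^-1` S) (g (Y2 w))%:E)%E => [v||] /=.
- by rewrite invfM mulrACA divff ?gt_eqF // mul1r.
- by rewrite gt0_muley ?lte_fin // !mul0r.
- by rewrite gt0_muleNy ?lte_fin // !mul0r.
Qed.

End proportional_laws.
End event_independence.

Section measurable_selector.
Context (R : realType) (dZ : measure_display) (Z : measurableType dZ) (m : nat)
  (psi : (m.+1.-tuple (measurableTypeR R) * Z)%type -> 'I_m.+1)
  (mpsi : forall k, measurable ([set rz | forall i, 0 <= tnth rz.1 i] `&`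
                                 psi @^-1` [set k])).

Lemma selection_event_measurable (d' : measure_display) (O' : measurableType d')
  (F : O' -> m.+1.-tuple (measurableTypeR R)) (Th : O' -> Z) (k : 'I_m.+1) :
  measurable_fun setT F -> measurable_fun setT Th ->
  (forall w i, 0 <= tnth (F w) i) ->
  measurable [set w | psi (F w, Th w) = k].
Proof.
move=> mF mTh F0; have := measurable_fun_pair mF mTh measurableT (mpsi k).
rewrite setTI; congr measurable; apply/seteqP; split=> w /=; first by case.
by move=> hw; split.
Qed.

End measurable_selector.

Section iid_samples.
Context (R : realType) (dT : measure_display) (T : measurableType dT)
  (dO : measure_display) (O : measurableType dO) (P : probability O R)
  (Xs : nat -> O -> T) (mXs : forall i, measurable_fun setT (Xs i)).

Lemma sample_preimage_measurable i (A : set T) :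
  measurable A -> measurable (Xs i @^-1` A).
Proof. by move=> mA; have := mXs i measurableT mA; rewrite setTI. Qed.

Hypothesis hind : mutually_independent P Xs.

(* Mutual independence of X_0, X_1, ... restricted to the samples X_1, X_2,
   ... (pad with the sure event for X_0). *)
Lemma shifted_samples_product n (A : nat -> set T) :
  (forall i, measurable (A i)) ->
  fine (P (\bigcap_(i in `I_n) (Xs i.+1 @^-1` A i))) =
  \prod_(i < n) fine (P (Xs i.+1 @^-1` A i)).
Proof.
move=> mA; pose A' i := if i is j.+1 then A j else setT.
have mA' i : measurable (A' i) by case: i => [|j] /=; [exact: measurableT|exact: mA].
have -> : \bigcap_(i in `I_n) (Xs i.+1 @^-1` A i) =
          \bigcap_(i in `I_n.+1) (Xs i @^-1` A' i).
  apply/seteqP; split=> w /= hw; last by move=> i /= ilt; exact: (hw i.+1).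
  by case=> [|i] //= ilt; exact: hw.
by rewrite (hind n.+1 mA') big_ord_recl /= probability_setT mul1r.
Qed.

Section cylinders.
Context (dZ : measure_display) (Z : measurableType dZ) (Th : O -> Z)
  (mTh : measurable_fun setT Th) (n : nat)
  (hTh : indep_of_vector P Th n (fun i => Xs i.+1)).

(* Cylinder events determined by Theta and the samples X_{i+1}, i < n, i != k:
   they generate the information carried by everything except X_{k+1}. *)
Definition cylinders_off (k : nat) : set (set O) :=
  [set G | exists C (A : nat -> set T),
     [/\ measurable C, forall i, measurable (A i), A k = setT &
         G = Th @^-1` C `&` \bigcap_(i in `I_n) (Xs i.+1 @^-1` A i)]].

Lemma cylinder_measurable (C : set Z) (A : nat -> set T) :
  measurable C -> (forall i, measurable (A i)) ->
  measurable (Th @^-1` C `&` \bigcap_(i in `I_n) (Xs i.+1 @^-1` A i)).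
Proof.
move=> mC mA; apply: measurableI.
  by have := mTh measurableT mC; rewrite setTI.
apply: fin_bigcap_measurable; first exact: finite_II.
by move=> i _; exact: sample_preimage_measurable.
Qed.

Lemma cylinders_setI_closed k : setI_closed (cylinders_off k).
Proof.
move=> G1 G2 [C1 [A1 [mC1 mA1 A1k ->]]] [C2 [A2 [mC2 mA2 A2k ->]]].
exists (C1 `&` C2), (fun i => A1 i `&` A2 i); split.
- exact: measurableI.
- by move=> i; exact: measurableI.
- by rewrite A1k A2k setIT.
apply/seteqP; split=> w /=.
  by move=> [[c1 a1] [c2 a2]]; split=> // i ilt; split; [exact: a1|exact: a2].
by move=> [[c1 c2] a]; split; split=> // i ilt; have [] := a i ilt.
Qed.

(* X_{k+1} is independent of every cylinder event not constraining it: insert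
   the constraint B in coordinate k and use the product formula twice. *)
Lemma sample_indep_cylinder k (B : set T) (G : set O) : (k < n)%N ->
  measurable B -> cylinders_off k G ->
  P (Xs k.+1 @^-1` B `&` G) = (P (Xs k.+1 @^-1` B) * P G)%E.
Proof.
move=> kn mB [C [A [mC mA Ak ->]]].
pose AB i := if i == k then B else A i.
have mAB i : measurable (AB i) by rewrite /AB; case: ifP.
have -> : Xs k.+1 @^-1` B `&` (Th @^-1` C `&` \bigcap_(i in `I_n) (Xs i.+1 @^-1` A i)) =
          Th @^-1` C `&` \bigcap_(i in `I_n) (Xs i.+1 @^-1` AB i).
  apply/seteqP; split=> w /=.
    move=> [Bw [Cw hA]]; split=> // i /= ilt; rewrite /AB.
    by case: eqP => [->|_]; [exact: Bw|exact: hA].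
  move=> [Cw hAB]; split; first by have := hAB k kn; rewrite /AB eqxx.
  split=> // i /= ilt; have := hAB i ilt; rewrite /AB.
  by case: eqP => [->|//]; rewrite Ak.
rewrite (probability_fine P (cylinder_measurable mC mAB)).
rewrite (probability_fine P (sample_preimage_measurable _ mB)).
rewrite (probability_fine P (cylinder_measurable mC mA)) -EFinM; congr EFin.
rewrite (hTh mC mAB) (hTh mC mA) !shifted_samples_product //.
rewrite (bigD1 (Ordinal kn)) // [X in _ = _ * (_ * X)](bigD1 (Ordinal kn)) //=.
rewrite /AB eqxx Ak preimage_setT probability_setT /= mul1r mulrCA.
congr (_ * (_ * _)); apply: eq_bigr => i ik; rewrite ifF //.
by apply/negbTE; move: ik; apply: contra => /eqP ik; apply/eqP/val_inj.
Qed.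

(* By the pi-lambda theorem, X_{k+1} is independent of the whole
   sigma-algebra generated by these cylinders. *)
Lemma sample_indep_generated k (B : set T) (G : set O) : (k < n)%N ->
  measurable B -> <<s cylinders_off k >> G ->
  measurable G /\ P (Xs k.+1 @^-1` B `&` G) = (P (Xs k.+1 @^-1` B) * P G)%E.
Proof.
move=> kn mB; apply: indep_event_sigma.
- exact: sample_preimage_measurable.
- exact: cylinders_setI_closed.
move=> H hH; split; last exact: sample_indep_cylinder.
by case: hH => C [A [mC mA _ ->]]; exact: cylinder_measurable.
Qed.

End cylinders.

Section nearest_neighbor_law.
Context (dZ : measure_display) (Z : measurableType dZ) (Th : O -> Z)
  (mTh : measurable_fun setT Th) (m : nat)
  (psi : (m.+1.-tuple (measurableTypeR R) * Z)%type -> 'I_m.+1)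
  (mpsi : forall k, measurable ([set rz | forall i, 0 <= tnth rz.1 i] `&`
                                 psi @^-1` [set k]))
  (dist : T -> T -> R) (hmet : is_metric dist) (hbor : borel_of_metric dist)
  (x : T).

Definition sample_distances (w : O) : m.+1.-tuple (measurableTypeR R) :=
  [tuple (dist x (Xs (val i).+1 w) : measurableTypeR R) | i < m.+1].

Definition selected_sample (w : O) : T :=
  Xs (val (psi (sample_distances w, Th w))).+1 w.

Lemma sample_distances_ge0 w i : 0 <= tnth (sample_distances w) i.
Proof. by rewrite tnth_mktuple; case: hmet. Qed.

Lemma selection_measurable (k : 'I_m.+1) :
  measurable [set w | psi (sample_distances w, Th w) = k].
Proof.
apply: selection_event_measurable => //; last exact: sample_distances_ge0.
apply/measurable_fun_tnthP => i.
rewrite (_ : _ \o _ = dist x \o Xs (val i).+1); last first.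
  by apply: funext => w; rewrite /= tnth_mktuple.
exact: measurableT_comp (dist_measurable hmet hbor x) (mXs _).
Qed.

Lemma selected_preimage_partition (B : set T) : selected_sample @^-1` B =
  \big[setU/set0]_(k < m.+1)
     (Xs (val k).+1 @^-1` B `&` [set w | psi (sample_distances w, Th w) = k]).
Proof.
rewrite -bigcup_mkord_ord; apply/seteqP; split=> w /=.
  by move=> hw; exists (val (psi (sample_distances w, Th w))); rewrite //= inord_val.
by move=> [i _ [hB hK]]; rewrite /selected_sample hK.
Qed.

Lemma selected_sample_measurable : measurable_fun setT selected_sample.
Proof.
move=> _ B mB; rewrite setTI selected_preimage_partition.
apply: bigsetU_measurable => k _; apply: measurableI.
  exact: sample_preimage_measurable.
exact: selection_measurable.
Qed.

Context (r : R) (r_ge0 : 0 <= r).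

(* The distance vector with the k-th entry frozen at r: it does not involve
   X_{k+1}, and coincides with the true vector when X_{k+1} lies on S_r. *)
Definition frozen_distances (k : 'I_m.+1) (w : O) : m.+1.-tuple (measurableTypeR R) :=
  [tuple (if i == k then r else dist x (Xs (val i).+1 w) : measurableTypeR R)
  | i < m.+1].

Definition frozen_selection (k : 'I_m.+1) : set O :=
  [set w | psi (frozen_distances k w, Th w) = k].

Lemma frozen_distancesE (k : 'I_m.+1) (w : O) :
  dist x (Xs (val k).+1 w) = r -> frozen_distances k w = sample_distances w.
Proof.
move=> h; apply: eq_from_tnth => i; rewrite !tnth_mktuple.
by case: eqP => [->|//]; rewrite h.
Qed.

Lemma frozen_selection_generated (k : 'I_m.+1) :
  <<s cylinders_off Th m.+1 (val k) >> (frozen_selection k).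
Proof.
pose O' := g_sigma_algebraType (cylinders_off Th m.+1 (val k)).
have mTh' : measurable_fun (setT : set O') Th.
  move=> _ C mC; rewrite setTI; apply: sub_sigma_algebra.
  exists C, (fun _ => setT); split => //.
  by apply/seteqP; split=> w /=; [move=> c; split|case].
have mdist (i : 'I_m.+1) : i != k ->
    measurable_fun (setT : set O') (fun w => dist x (Xs (val i).+1 w)).
  move=> ik _ U mU; rewrite setTI; apply: sub_sigma_algebra.
  exists setT, (fun j => if j == val i then dist x @^-1` U else setT); split.
  - exact: measurableT.
  - move=> j; case: ifP => _ //.
    by have := dist_measurable hmet hbor x measurableT mU; rewrite setTI.
  - by rewrite ifF //; apply/negbTE; move: ik; apply: contra => /eqP/val_inj ->.
  apply/seteqP; split=> w /=.
    by move=> hw; split=> // j /= jlt; case: eqP => [->|//]; exact: hw.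
  by move=> [_ /(_ (val i) (ltn_ord i))]; rewrite eqxx.
apply: (@selection_event_measurable _ _ _ _ psi mpsi _ O').
- apply/measurable_fun_tnthP => i; case: (eqVneq i k) => [->|ik].
    rewrite (_ : _ \o _ = cst r); first exact: measurable_cst.
    by apply: funext => w; rewrite /= tnth_mktuple eqxx.
  rewrite (_ : _ \o _ = (fun w => dist x (Xs (val i).+1 w))); first exact: mdist.
  by apply: funext => w; rewrite /= tnth_mktuple (negbTE ik).
- exact: mTh'.
- by move=> w i; rewrite tnth_mktuple; case: ifP => // _; case: hmet.
Qed.

Hypotheses (hTh : indep_of_vector P Th m.+1 (fun i => Xs i.+1))
  (hid : identically_distributed P Xs).

Lemma sample_indep_frozen_selection (k : 'I_m.+1) (B : set T) : measurable B ->
  measurable (frozen_selection k) /\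
  P (Xs (val k).+1 @^-1` B `&` frozen_selection k) =
  (P (Xs (val k).+1 @^-1` B) * P (frozen_selection k))%E.
Proof.
move=> mB; apply: (sample_indep_generated mTh hTh (ltn_ord k) mB).
exact: frozen_selection_generated.
Qed.

Definition selection_weight : R := \sum_(k < m.+1) fine (P (frozen_selection k)).

Lemma selected_law_on_sphere :
  law_proportional_on P selected_sample (Xs 0) (sphere dist x r) selection_weight.
Proof.
move=> B mB BS.
have piece (k : 'I_m.+1) :
    Xs (val k).+1 @^-1` B `&` [set w | psi (sample_distances w, Th w) = k] =
    Xs (val k).+1 @^-1` B `&` frozen_selection k.
  apply/seteqP; split=> w /= [hB hk]; split=> //.
    by rewrite /frozen_selection /= frozen_distancesE //; exact: BS.
  by rewrite -(@frozen_distancesE k w) //; exact: BS.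
rewrite selected_preimage_partition (measure_bigsetU_ord P xpredT); last 2 first.
- move=> k; apply: measurableI; first exact: sample_preimage_measurable.
  exact: selection_measurable.
- apply/trivIsetP => i j _ _ ij; rewrite -subset0 => w [[_ hi] [_ hj]].
  by move/negP: ij; apply; rewrite -hi -hj.
rewrite /selection_weight mulr_suml -sumEFin; apply: eq_bigr => k _.
have [mG indep] := sample_indep_frozen_selection k mB.
rewrite piece; transitivity (P (Xs (val k).+1 @^-1` B) * P (frozen_selection k))%E.
  exact: indep.
rewrite (hid (val k).+1 mB) EFinM muleC -(probability_fine P mG).
by rewrite -(probability_fine P (sample_preimage_measurable 0 mB)).
Qed.

(* The selected sample is one of the samples, so it lies on S_r as soon as all
   samples do: P(selected in S_r) >= P(X in S_r)^(m+1). *)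
Lemma selected_on_sphere_lower_bound :
  (((fine (P (Xs 0 @^-1` sphere dist x r))) ^+ m.+1)%:E
     <= P (selected_sample @^-1` sphere dist x r))%E.
Proof.
have mS := sphere_measurable hmet hbor x r.
have all_on_sphere : measurable (\bigcap_(i in `I_m.+1) (Xs i.+1 @^-1` sphere dist x r)).
  apply: fin_bigcap_measurable; first exact: finite_II.
  by move=> i _; exact: sample_preimage_measurable.
apply: (@le_trans _ _ (P (\bigcap_(i in `I_m.+1) (Xs i.+1 @^-1` sphere dist x r)))).
  rewrite (probability_fine P all_on_sphere) lee_fin.
  rewrite (shifted_samples_product m.+1 (fun=> mS)).
  rewrite (eq_bigr (fun=> fine (P (Xs 0 @^-1` sphere dist x r)))).
    by rewrite prodr_const card_ord.
  by move=> i _; congr fine; exact: hid.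
apply: le_measure; rewrite ?inE //.
  by have := selected_sample_measurable measurableT mS; rewrite setTI.
by move=> w hw; exact: (hw _ (ltn_ord (psi (sample_distances w, Th w)))).
Qed.

(* Comparing the identity above on B = S_r with the lower bound gives q > 0. *)
Lemma selection_weight_gt0 :
  (0 < P (Xs 0 @^-1` sphere dist x r))%E -> 0 < selection_weight.
Proof.
move=> hs; have mS := sphere_measurable hmet hbor x r.
have p_gt0 : 0 < fine (P (Xs 0 @^-1` sphere dist x r)).
  by move: hs; rewrite (probability_fine P (sample_preimage_measurable 0 mS)).
have := selected_on_sphere_lower_bound.
rewrite (selected_law_on_sphere mS (@subset_refl _ _)) lee_fin => lb.
by rewrite -(pmulr_lgt0 _ p_gt0); apply: lt_le_trans lb; exact: exprn_gt0.
Qed.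

End nearest_neighbor_law.
End iid_samples.

Theorem mainTheorem11 (R : realType) (dT : measure_display) (T : measurableType dT)
  (dist : T -> T -> R) (dO : measure_display) (O : measurableType dO)
  (P : probability O R) (Xs : nat -> O -> T)
  (dZ : nat -> measure_display) (Z : forall m, measurableType (dZ m))
  (Theta : forall m, O -> Z m)
  (psi : forall m, (m.+1.-tuple (measurableTypeR R) * Z m)%type -> 'I_m.+1)
  (x : T) (eta : T -> R) :
  is_metric dist ->
  borel_of_metric dist ->
  (forall i, measurable_fun setT (Xs i)) ->
  mutually_independent P Xs ->
  identically_distributed P Xs ->
  measurable_fun setT (eta : T -> measurableTypeR R) ->
  (exists K : R, forall y, `|eta y| <= K) ->
  is_ISIMIN P Xs Theta psi ->
  (forall r : R, 0 < r -> (0 < P (Xs 0%N @^-1` sphere dist x r))%E ->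
     forall (m : nat) (A : set T), measurable A ->
       condprob P (nearest_neighbor dist x Xs Theta psi m @^-1` A)
                  (nearest_neighbor dist x Xs Theta psi m @^-1` sphere dist x r)
       = condprob P (Xs 0%N @^-1` A) (Xs 0%N @^-1` sphere dist x r))
  /\
  (exists C : R, 0 < C /\ exists Rad : R, 0 < Rad /\ exists M : nat,
     forall (r : R) (m : nat), 0 < r -> r < Rad -> (M <= m)%N ->
       (0 < P (Xs 0%N @^-1` sphere dist x r))%E ->
       condexp P (fun w => `|eta (nearest_neighbor dist x Xs Theta psi m w) - eta x|)
                 (nearest_neighbor dist x Xs Theta psi m @^-1` sphere dist x r)
       <= C * condexp P (fun w => `|eta (Xs 0%N w) - eta x|)
                        (Xs 0%N @^-1` sphere dist x r)).
Proof.
move=> hmet hbor mXs hind hid meta _ hisi.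
have mS r := sphere_measurable hmet hbor x r.
have law r m : 0 < r -> (0 < P (Xs 0%N @^-1` sphere dist x r))%E ->
    exists2 q : R, 0 < q &
    law_proportional_on P (nearest_neighbor dist x Xs Theta psi m) (Xs 0%N)
      (sphere dist x r) q.
  move=> r_gt0 hs; have [mTh hTh mpsi _] := hisi m.
  eexists; first exact: (selection_weight_gt0 mXs hind mTh mpsi hmet hbor
                           (x:=x) (ltW r_gt0) hTh hid hs).
  exact: (selected_law_on_sphere mXs hind mTh mpsi hmet hbor (x:=x) (ltW r_gt0) hTh hid).
split=> [r r_gt0 hs m A mA|].
  have [q q_gt0 hlaw] := law r m r_gt0 hs.
  by have := condprob_proportional_law hlaw (lt0r_neq0 q_gt0) (mS r) mA.
exists 1; split=> //; exists 1; split=> //; exists 0%N => r m r_gt0 _ _ hs.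
have [q q_gt0 hlaw] := law r m r_gt0 hs; have [mTh _ mpsi _] := hisi m.
rewrite mul1r le_eqVlt; apply/orP; left; apply/eqP.
apply: (condexp_proportional_law (g := fun y => `|eta y - eta x|) hlaw _ (mXs 0%N)
          (mS r) q_gt0) => //.
- exact: (selected_sample_measurable mXs mTh mpsi hmet hbor x).
- by apply: measurableT_comp => //; exact: measurable_funB.
Qed.
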